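(* Let $\bm\mu=(\mu_1,\dots,\mu_r)$ be finite positive Borel measures on the unit circle, each with infinite support, fix a square-root branch as in the context, and let $\bm n\in\mathbb N^r$. The following are equivalent: (i) there is a unique $\phi\in\operatorname{span}\{z^p\}_{p=-|\bm n|/2}^{|\bm n|/2}$ with coefficient of $z^{|\bm n|/2}$ equal to $1$ satisfying $\int\phi(z)z^{-p}\,d\mu_j(z)=0$ for $p=-n_j/2,\dots,n_j/2-1$, $j=1,\dots,r$; (ii) there is no nonzero $\phi\in\operatorname{span}\{z^p\}_{p=-|\bm n|/2}^{|\bm n|/2-1}$ satisfying these orthogonality relations; (iii) there is a unique $\psi\in\operatorname{span}\{z^p\}_{p=-|\bm n|/2}^{|\bm n|/2}$ with coefficient of $z^{-|\bm n|/2}$ equal to $1$ satisfying $\int\psi(z)z^{-p}\,d\mu_j(z)=0$ for $p=-n_j/2+1,\dots,n_j/2$, $j=1,\dots,r$; (iv) there is no nonzero $\psi\in\operatorname{span}\{z^p\}_{p=-|\bm n|/2+1}^{|\bm n|/2}$ satisfying the orthogonality relations in (iii); (v) $\det T_{\bm n}\neq0$, where $T_{\bm n}$ is the $|\bm n|\times|\bm n|$ matrix whose rows are indexed by pairs $(j,q)$, $j=1,\dots,r$, $q=n_j/2,n_j/2-1,\dots,-n_j/2+1$ (ordered by $j$, then by decreasing $q$), whose columns are indexed by $k=-|\bm n|/2,\dots,|\bm n|/2-1$, and whose $((j,q),k)$ entry is $\int z^{k}z^{q}\,d\mu_j(z)$ (with the convention $\det T_{\bm 0}=1$).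
   Context: $\partial\mathbb D=\{|z|=1\}$. Fix $t_0\in\mathbb R$ and define $z^{k/2}=|z|^{k/2}\exp(ik\arg_{[t_0,t_0+2\pi)}(z)/2)$, $k\in\mathbb Z$, with $\arg$ taking values in $[t_0,t_0+2\pi)$. For $\bm n=(n_1,\dots,n_r)$ of non-negative integers, $|\bm n|=n_1+\dots+n_r$. For integers or half-integers $a\le b$ with $b-a\in\mathbb Z$, $\operatorname{span}\{z^p\}_{p=a}^b$ is the span of $z^a,z^{a+1},\dots,z^b$ (the zero space if $a>b$). Condition (i) is the definition of $\bm n$ being ''$\phi$-normal''. *)

From HB Require Import structures.
From mathcomp Require Import all_boot all_order all_algebra.
From mathcomp Require Import all_classical all_reals all_analysis.
From mathcomp Require Import complex.
Set Implicit Arguments. Unset Strict Implicit. Unset Printing Implicit Defensive.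
Import Order.TTheory GRing.Theory Num.Theory.
Local Open Scope classical_set_scope.
Local Open Scope ring_scope.
Local Open Scope complex_scope.

Section Defs.
Variable R : realType.

(* A point z of the unit circle is represented by its angle t in
   [t0, t0 + 2 pi), i.e. z = e^{it} and arg_{[t0,t0+2pi)} z = t.
   zhalf k t  is  z^{k/2} = |z|^{k/2} exp(i k arg(z) / 2) with |z| = 1. *)
Definition zhalf (k : int) (t : R) : R[i] :=
  (cos (k%:~R * t / 2)) +i* (sin (k%:~R * t / 2)).

Definition cint (mu : {measure set R -> \bar R}) (f : R -> R[i]) : R[i] :=
  (Rintegral mu setT (fun t => complex.Re (f t))) +i* (Rintegral mu setT (fun t => complex.Im (f t))).

(* mu (on angles) encodes a finite positive Borel measure on the unit
   circle (pushed forward by t |-> e^{it}) with infinite support *)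
Definition circle_measure_inf_supp (t0 : R) (mu : {measure set R -> \bar R}) : Prop :=
  [/\ mu (~` `[t0, t0 + 2 * pi[) = 0%E,
      (mu setT < +oo)%E &
      forall S : set R, finite_set S -> (0 < mu (~` S))%E].

(* phi(z) = sum_{i < m} c_i z^{(2 i + e0)/2}  (exponents doubled) *)
Definition hpoly (m : nat) (e0 : int) (c : 'rV[R[i]]_m) (t : R) : R[i] :=
  \sum_(i < m) c 0 i * zhalf (e0 + 2 * (i : nat)%:Z) t.

(* The matrix T_n: block j has rows q = n_j/2, ..., -n_j/2+1 (row m has
   q = (n_j - 2m)/2), columns k = -|n|/2, ..., |n|/2 - 1 (column c has
   k = (2c - |n|)/2). *)
Definition Tmat (r : nat) (n : 'I_r -> nat) (mu : 'I_r -> {measure set R -> \bar R}) :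
  'M[R[i]]_(\sum_(j < r) n j) :=
  \mxcol_(j < r) \matrix_(m < n j, c < \sum_(l < r) n l)
     cint (mu j) (fun t => zhalf (2 * (c : nat)%:Z - (\sum_(l < r) n l)%N%:Z) t
                           * zhalf ((n j)%:Z - 2 * (m : nat)%:Z) t).

End Defs.

From HB Require Import structures.
From mathcomp Require Import all_boot all_order all_algebra.
From mathcomp Require Import all_classical all_reals all_analysis.
From mathcomp Require Import complex measurable_realfun zify.
Set Implicit Arguments. Unset Strict Implicit. Unset Printing Implicit Defensive.
Import GRing.Theory Num.Theory.
Import numFieldNormedType.Exports.
Local Open Scope classical_set_scope.
Local Open Scope ring_scope.
Local Open Scope complex_scope.

(* Since z^{a/2} z^{b/2} = z^{(a+b)/2}, expanding phi in the basis z^{p} turns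
   every orthogonality relation into a linear equation on its coefficients,
   with the moments of the mu_j as coefficients.  In (ii) and (iv) the |n|
   unknowns satisfy |n| equations whose matrix is the transpose of T_n, so
   only the zero solution exists iff det T_n <> 0.  In (i) and (iii) there are
   |n| + 1 unknowns; once the extreme coefficient is fixed to 1, the remaining
   ones solve an inhomogeneous system with the same matrix, which has a unique
   solution iff det T_n <> 0. *)

Section LeftKernels.
Variable F : fieldType.

Lemma rV_mul_eq0_det n (A : 'M[F]_n) :
  (forall v : 'rV_n, v *m A = 0 -> v = 0) <-> \det A != 0.
Proof.
split=> [kerA | detA v vA].
  by apply/det0P => -[v /eqP vN0 /kerA].
by apply: contraNeq detA => vN0; apply/det0P; exists v.
Qed.

Lemma affine_solution_uniq_det n (A : 'M[F]_n) (b : 'rV_n) :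
  (exists! x : 'rV_n, x *m A = b) <-> \det A != 0.
Proof.
split=> [[x [xA x_uniq]] | detA].
  apply/rV_mul_eq0_det => v vA.
  have: x + 0 = x + v.
    by rewrite addr0; apply: x_uniq; rewrite mulmxDl xA vA addr0.
  by move/addrI ->.
have uA : A \in unitmx by rewrite unitmxE unitfE.
exists (b *m invmx A); split=> [|y <-]; first by rewrite mulmxKV.
by rewrite mulmxK.
Qed.

Definition row_insert n (p : 'I_n.+1) (a : F) (x : 'rV[F]_n) : 'rV[F]_n.+1 :=
  \row_i oapp (x 0) a (unlift p i).

Lemma row_insert_at n p a (x : 'rV[F]_n) : row_insert p a x 0 p = a.
Proof. by rewrite mxE unlift_none. Qed.

Lemma col'_row_insert n p a (x : 'rV[F]_n) : col' p (row_insert p a x) = x.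
Proof. by apply/rowP => k; rewrite !mxE liftK. Qed.

Lemma row_insert_col' n p (c : 'rV[F]_n.+1) : row_insert p (c 0 p) (col' p c) = c.
Proof.
apply/rowP => i; rewrite !mxE.
by case: unliftP => [k -> | ->] /=; rewrite ?mxE.
Qed.

Lemma mulmx_col'_row' m n (p : 'I_m.+1) (c : 'rV[F]_m.+1) (G : 'M[F]_(m.+1, n)) :
  c *m G = col' p c *m row' p G + c 0 p *: row p G.
Proof.
apply/rowP => k; rewrite !mxE (bigD1_ord p) //= addrC.
by congr (_ + _); apply: eq_bigr => i _; rewrite !mxE.
Qed.

Lemma normalized_kernel_uniq_det n (G : 'M[F]_(n.+1, n)) (p : 'I_n.+1) :
  (exists! c : 'rV_n.+1, c ord0 p = 1 /\ c *m G = 0) <-> \det (row' p G) != 0.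
Proof.
have eqn_insert (x : 'rV_n) :
    row_insert p 1 x *m G = 0 <-> x *m row' p G = - row p G.
  rewrite (mulmx_col'_row' p) col'_row_insert row_insert_at scale1r.
  by split=> [/eqP|->]; [rewrite addr_eq0 => /eqP | rewrite addNr].
rewrite -(affine_solution_uniq_det _ (- row p G)).
split=> [[c [[c1 cG] c_uniq]] | [x [xG x_uniq]]].
  have c_ins : c = row_insert p 1 (col' p c) by rewrite -c1 row_insert_col'.
  exists (col' p c); split=> [|y yG]; first by apply/eqn_insert; rewrite -c_ins.
  rewrite (c_uniq (row_insert p 1 y)) ?col'_row_insert //.
  by split; [apply: row_insert_at | apply/eqn_insert].
exists (row_insert p 1 x); split=> [|c [c1 cG]].
  by split; [apply: row_insert_at | apply/eqn_insert].
rewrite -[c](row_insert_col' p) c1 -(x_uniq (col' p c)) //.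
by apply/eqn_insert; rewrite -c1 row_insert_col'.
Qed.

End LeftKernels.

Section ComplexIntegral.
Variables (R : realType) (mu : {measure set R -> \bar R}).
Implicit Types (f g : R -> R[i]) (h k : R -> R).

Local Notation rintegrable h := (mu.-integrable setT (EFin \o h)).

Lemma rintegrable_dilate_bounded (u : R -> R) (a : R) :
  (mu setT < +oo)%E -> continuous u -> (forall x, `|u x| <= 1) ->
  rintegrable (fun t => u (a * t)).
Proof.
move=> mu_fin u_cont u_bd; apply: measurable_bounded_integrable => //.
  apply: (measurableT_comp (@continuous_measurable_fun R u u_cont)).
  exact: mulrl_measurable.
apply: (@sub_boundedl _ _ _ _ (cst (1 : R))); last exact: bounded_cst.
by move=> x _ /=; rewrite normr1.
Qed.

Lemma rintegrableD h k : rintegrable h -> rintegrable k ->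
  rintegrable (fun t => h t + k t).
Proof.
by move=> ih ik; apply: eq_integrable (integrableD _ ih ik).
Qed.

Lemma rintegrableZ a h : rintegrable h -> rintegrable (fun t => a * h t).
Proof.
by move=> ih; apply: eq_integrable (integrableZl _ a ih).
Qed.

Lemma rintegrableB h k : rintegrable h -> rintegrable k ->
  rintegrable (fun t => h t - k t).
Proof.
by move=> ih ik; apply: eq_integrable (integrableB _ ih ik).
Qed.

Let ReD (z w : R[i]) : complex.Re (z + w) = complex.Re z + complex.Re w.
Proof. by case: z; case: w. Qed.

Let ImD (z w : R[i]) : complex.Im (z + w) = complex.Im z + complex.Im w.
Proof. by case: z; case: w. Qed.

Let ReM (z w : R[i]) :
  complex.Re (z * w) = complex.Re z * complex.Re w - complex.Im z * complex.Im w.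
Proof. by case: z; case: w. Qed.

Let ImM (z w : R[i]) :
  complex.Im (z * w) = complex.Re z * complex.Im w + complex.Im z * complex.Re w.
Proof. by case: z; case: w. Qed.

Definition cintegrable f :=
  rintegrable (fun t => complex.Re (f t)) /\
  rintegrable (fun t => complex.Im (f t)).

Lemma cintegrableD f g : cintegrable f -> cintegrable g ->
  cintegrable (fun t => f t + g t).
Proof.
move=> [fRe fIm] [gRe gIm].
by split; [under eq_fun do rewrite ReD | under eq_fun do rewrite ImD];
  apply: rintegrableD.
Qed.

Lemma cintegrableZ a f : cintegrable f -> cintegrable (fun t => a * f t).
Proof.
move=> [fRe fIm]; split.
  under eq_fun do rewrite ReM.
  by apply: rintegrableB; apply: rintegrableZ.
under eq_fun do rewrite ImM.
by apply: rintegrableD; apply: rintegrableZ.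
Qed.

Lemma cintegrable_sum (I : Type) (s : seq I) (F : I -> R -> R[i]) :
  (forall i, cintegrable (F i)) -> cintegrable (fun t => \sum_(i <- s) F i t).
Proof.
move=> iF; elim: s => [|i s IHs].
  by under eq_fun do rewrite big_nil; split; exact: integrable0.
under eq_fun do rewrite big_cons.
exact: cintegrableD.
Qed.

Lemma cintD f g : cintegrable f -> cintegrable g ->
  cint mu (fun t => f t + g t) = cint mu f + cint mu g.
Proof.
move=> [fRe fIm] [gRe gIm]; rewrite /cint.
under eq_Rintegral do rewrite ReD.
under [X in _ +i* X]eq_Rintegral do rewrite ImD.
by rewrite !RintegralD.
Qed.

Lemma cintZ a f : cintegrable f -> cint mu (fun t => a * f t) = a * cint mu f.
Proof.
move=> [fRe fIm]; rewrite /cint.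
under eq_Rintegral do rewrite ReM.
under [X in _ +i* X]eq_Rintegral do rewrite ImM.
rewrite RintegralB ?RintegralD ?RintegralZl //; try exact: rintegrableZ.
by case: a.
Qed.

Lemma cint_sum (I : Type) (s : seq I) (F : I -> R -> R[i]) :
  (forall i, cintegrable (F i)) ->
  cint mu (fun t => \sum_(i <- s) F i t) = \sum_(i <- s) cint mu (F i).
Proof.
move=> iF; elim: s => [|i s IHs].
  under eq_fun do rewrite big_nil.
  by rewrite big_nil /cint !Rintegral_cst // !mul0r.
under eq_fun do rewrite big_cons.
by rewrite big_cons cintD ?IHs //; exact: cintegrable_sum.
Qed.

End ComplexIntegral.

Section Moments.
Variable R : realType.
Implicit Type mu : {measure set R -> \bar R}.

Lemma zhalfD (a b : int) (t : R) : zhalf a t * zhalf b t = zhalf (a + b) t.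
Proof.
rewrite /zhalf intrD !mulrDl cosD sinD.
by congr (_ +i* _); rewrite addrC.
Qed.

Lemma cintegrable_zhalf mu k : (mu setT < +oo)%E -> cintegrable mu (zhalf k).
Proof.
move=> mu_fin; split=> /=.
  under eq_fun do rewrite mulrAC.
  by apply: rintegrable_dilate_bounded => //;
    [exact: continuous_cos | exact: cos_max].
under eq_fun do rewrite mulrAC.
by apply: rintegrable_dilate_bounded => //;
  [exact: continuous_sin | exact: sin_max].
Qed.

Lemma cint_hpolyM_zhalf mu M e0 e1 (c : 'rV[R[i]]_M) : (mu setT < +oo)%E ->
  cint mu (fun t => hpoly e0 c t * zhalf e1 t) =
  \sum_(i < M) c ord0 i * cint mu (zhalf (e0 + 2 * (i : nat)%:Z + e1)).
Proof.
move=> mu_fin; rewrite /hpoly.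
under eq_fun do rewrite mulr_suml.
under eq_fun do under eq_bigr do rewrite -mulrA zhalfD.
rewrite cint_sum => [|i]; last exact/cintegrableZ/cintegrable_zhalf.
by apply: eq_bigr => i _; rewrite cintZ //; exact: cintegrable_zhalf.
Qed.

End Moments.

Section MomentMatrix.
Variables (R : realType) (r : nat) (n : 'I_r -> nat).
Variable mu : 'I_r -> {measure set R -> \bar R}.
Hypothesis mu_fin : forall j, (mu j setT < +oo)%E.
Local Notation N := (\sum_(j < r) n j)%N.

Definition Tmat_exponent j (i m : nat) : int :=
  2 * i%:Z - N%:Z + ((n j)%:Z - 2 * m%:Z).

Definition moment_mx M (e : forall j, 'I_M -> 'I_(n j) -> int) :
  'M[R[i]]_(M, N) :=
  \mxrow_j \matrix_(i < M, m < n j) cint (mu j) (zhalf (e j i m)).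

Lemma eq_moment_mx M (e e' : forall j, 'I_M -> 'I_(n j) -> int) :
  (forall j i m, e j i m = e' j i m) -> moment_mx e = moment_mx e'.
Proof.
move=> ee'; apply/eq_mxrow => j.
by apply/matrixP => i m; rewrite !mxE ee'.
Qed.

Lemma row'_moment_mx M (p : 'I_M.+1) e :
  row' p (moment_mx e) = moment_mx (fun j i m => e j (lift p i) m).
Proof. by apply/matrixP => i k; rewrite !mxE. Qed.

Lemma Tmat_trE : (Tmat n mu)^T = moment_mx (fun j i m => Tmat_exponent j i m).
Proof.
rewrite /Tmat tr_mxcol; apply/eq_mxrow => j.
apply/matrixP => i m; rewrite !mxE.
by congr cint; apply: funext => t; rewrite zhalfD.
Qed.

Lemma orthogonal_moment_mxP M e0 (e1 : forall j, 'I_(n j) -> int) (c : 'rV_M) :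
  (forall j m, cint (mu j) (fun t => hpoly e0 c t * zhalf (e1 j m) t) = 0) <->
  c *m moment_mx (fun j i m => e0 + 2 * (i : nat)%:Z + e1 j m) = 0.
Proof.
rewrite mul_mxrow -(mxrow0 (q_ := n)) -eq_mxrowP.
have entry j m : (c *m \matrix_(i < M, m < n j)
    cint (mu j) (zhalf (e0 + 2 * (i : nat)%:Z + e1 j m))) 0 m =
    cint (mu j) (fun t => hpoly e0 c t * zhalf (e1 j m) t).
  by rewrite cint_hpolyM_zhalf // mxE; apply: eq_bigr => i _; rewrite mxE.
split=> [orth j | cM j m]; first by apply/rowP => m; rewrite entry orth mxE.
by rewrite -entry cM mxE.
Qed.

Lemma orthogonal_trivial_det e0 (e1 : forall j, 'I_(n j) -> int) :
    (forall j (i : 'I_N) m,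
       e0 + 2 * (i : nat)%:Z + e1 j m = Tmat_exponent j i m) ->
  (forall c : 'rV_N,
     (forall j m, cint (mu j) (fun t => hpoly e0 c t * zhalf (e1 j m) t) = 0) ->
     c = 0)
  <-> \det (Tmat n mu) != 0.
Proof.
move=> e1E; rewrite -det_tr -rV_mul_eq0_det Tmat_trE -(eq_moment_mx e1E).
by setoid_rewrite orthogonal_moment_mxP.
Qed.

Lemma orthogonal_normalized_uniq_det e0 (e1 : forall j, 'I_(n j) -> int)
    (p : 'I_N.+1) :
    (forall j (i : 'I_N) m,
       e0 + 2 * (lift p i : nat)%:Z + e1 j m = Tmat_exponent j i m) ->
  (exists! c : 'rV_N.+1, c ord0 p = 1 /\
     (forall j m, cint (mu j) (fun t => hpoly e0 c t * zhalf (e1 j m) t) = 0))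
  <-> \det (Tmat n mu) != 0.
Proof.
move=> e1E; rewrite -det_tr.
have -> : (Tmat n mu)^T =
    row' p (moment_mx (fun j i m => e0 + 2 * (i : nat)%:Z + e1 j m)).
  by rewrite row'_moment_mx Tmat_trE; apply: eq_moment_mx => j i m; rewrite e1E.
rewrite -normalized_kernel_uniq_det.
have orthE c := orthogonal_moment_mxP e0 e1 c.
by split=> -[c [[c1 /orthE cG] c_uniq]]; exists c;
  split=> [|c' [c'1 /orthE c'G]]; by [split | apply: c_uniq].
Qed.

End MomentMatrix.

Theorem proposition2p2 (R : realType) (t0 : R) (r : nat) (n : 'I_r -> nat)
    (mu : 'I_r -> {measure set R -> \bar R})
    (hmu : forall j, circle_measure_inf_supp t0 (mu j)) :
  let N := (\sum_(j < r) n j)%N in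
  [<->
   (* (i) *)
   exists! c : 'rV[R[i]]_N.+1,
     c ord0 ord_max = 1 /\
     (forall (j : 'I_r) (m : 'I_(n j)),
        cint (mu j) (fun t => hpoly (- N%:Z) c t
                              * zhalf (- (2 * (m : nat)%:Z - (n j)%:Z)) t) = 0);
   (* (ii) *)
   forall c : 'rV[R[i]]_N,
     (forall (j : 'I_r) (m : 'I_(n j)),
        cint (mu j) (fun t => hpoly (- N%:Z) c t
                              * zhalf (- (2 * (m : nat)%:Z - (n j)%:Z)) t) = 0) ->
     c = 0;
   (* (iii) *)
   exists! c : 'rV[R[i]]_N.+1,
     c ord0 ord0 = 1 /\
     (forall (j : 'I_r) (m : 'I_(n j)),
        cint (mu j) (fun t => hpoly (- N%:Z) c t
                              * zhalf (- (2 * (m.+1 : nat)%:Z - (n j)%:Z)) t) = 0);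
   (* (iv) *)
   forall c : 'rV[R[i]]_N,
     (forall (j : 'I_r) (m : 'I_(n j)),
        cint (mu j) (fun t => hpoly (- N%:Z + 2) c t
                              * zhalf (- (2 * (m.+1 : nat)%:Z - (n j)%:Z)) t) = 0) ->
     c = 0;
   (* (v) *)
   \det (Tmat n mu) != 0].
Proof.
move=> N; have mu_fin j : (mu j setT < +oo)%E by case: (hmu j).
pose e1 j (m : 'I_(n j)) := - (2 * (m : nat)%:Z - (n j)%:Z).
pose e1' j (m : 'I_(n j)) := - (2 * (m.+1 : nat)%:Z - (n j)%:Z).
have Ei := @orthogonal_normalized_uniq_det _ _ _ _ mu_fin (- N%:Z) e1 ord_max
  ltac:(by move=> j i m; rewrite lift_max /e1 /Tmat_exponent; lia).
have Eii := @orthogonal_trivial_det _ _ _ _ mu_fin (- N%:Z) e1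
  ltac:(by move=> j i m; rewrite /e1 /Tmat_exponent; lia).
have Eiii := @orthogonal_normalized_uniq_det _ _ _ _ mu_fin (- N%:Z) e1' ord0
  ltac:(by move=> j i m; rewrite lift0 /e1' /Tmat_exponent; lia).
have Eiv := @orthogonal_trivial_det _ _ _ _ mu_fin (- N%:Z + 2) e1'
  ltac:(by move=> j i m; rewrite /e1' /Tmat_exponent; lia).
tfae.
- by move/Ei/Eii.
- by move/Eii/Eiii.
- by move/Eiii/Eiv.
- by move/Eiv.
- by move/Ei.
Qed.
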